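(* Let $\alpha=\{a_k\}_{k\ge1}$ be a sequence of positive numbers with $a_k\to\infty$ and $x_\alpha=1$, and let $j\ge2$. If there is $N_0$ such that $$\int_0^1 L(x;\alpha;j)\,F_{N_0}(x;\alpha)\,|\ln x|^{j-1}\frac{dx}{x}<\infty,$$ then $\lim_{N\to\infty}E[U_j^N]=I(\alpha;j)<\infty$.
   Context: For $N\ge2$, coupon type $k\in\{1,\dots,N\}$ has probability $a_k/\sum_{i=1}^Na_i$; $U_j^N$ is the number of empty album places of the $j$-th collector when the first collector completes her set (each collector passes duplicates to the next one), with $$E[U_j^N]=\sum_{k=1}^N\int_0^\infty a_k e^{-a_k t}\frac{(a_kt)^{j-1}}{(j-1)!}\prod_{i\ne k,\,1\le i\le N}\big(1-e^{-a_i t}\big)\,dt.$$ $x_\alpha:=\inf\{x\in[0,1]:\sum_{k}x^{a_k}=\infty\}$. For $x\in(0,x_\alpha)$: $L(x;\alpha;j):=\sum_{k=1}^\infty a_k^j\frac{x^{a_k}}{1-x^{a_k}}$, $F(x;\alpha):=\prod_{k=1}^\infty(1-x^{a_k})$; $F_{N}(x;\alpha):=\prod_{k=1}^{N}(1-x^{a_k})$; and $I(\alpha;j):=\frac{1}{(j-1)!}\int_0^{x_\alpha}L(x;\alpha;j)F(x;\alpha)|\ln x|^{j-1}\frac{dx}{x}$. *)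

From Stdlib Require Import Reals Lra Lia Arith Factorial Classical ClassicalEpsilon.
Open Scope R_scope.

(* Convention: the sequence alpha = (a_1, a_2, ...) is given as  a : nat -> R
   with  a k  standing for  a_{k+1}  (0-based indexing).  Coupon types
   1..N correspond to indices 0..N-1. *)

(* real power x^p for x >= 0 (with 0^p = 0, used only for p > 0) *)
Definition rpow (x p : R) : R := if Rlt_dec 0 x then Rpower x p else 0.

Fixpoint fsum (n : nat) (f : nat -> R) : R :=
  match n with O => 0 | S m => fsum m f + f m end.
Fixpoint fprod (n : nat) (f : nat -> R) : R :=
  match n with O => 1 | S m => fprod m f * f m end.

Definition seq_lim (u : nat -> R) : R :=
  epsilon (inhabits 0) (fun l => Un_cv u l).

Definition series (u : nat -> R) : R := seq_lim (fun n => fsum (S n) u).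

Definition infprod (u : nat -> R) : R := seq_lim (fun n => fprod (S n) u).

Definition is_inf (S : R -> Prop) (m : R) : Prop :=
  (forall x, S x -> m <= x) /\ (forall b, (forall x, S x -> b <= x) -> b <= m).

Definition div_set (a : nat -> R) (x : R) : Prop :=
  0 <= x <= 1 /\ ~ (exists l, infinite_sum (fun k => rpow x (a k)) l).

Definition x_alpha (a : nat -> R) : R := epsilon (inhabits 0) (is_inf (div_set a)).

Definition int01_cv (f : R -> R) (l : R) : Prop :=
  (forall u v, 0 < u -> u <= v -> v < 1 -> inhabited (Riemann_integrable f u v)) /\
  forall eps, 0 < eps -> exists d, 0 < d /\
    forall u v (pr : Riemann_integrable f u v),
      0 < u < d -> 1 - d < v < 1 -> u <= v -> Rabs (RiemannInt pr - l) < eps.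

Definition int0inf_cv (f : R -> R) (l : R) : Prop :=
  (forall u v, 0 < u -> u <= v -> inhabited (Riemann_integrable f u v)) /\
  forall eps, 0 < eps -> exists d M, 0 < d /\
    forall u v (pr : Riemann_integrable f u v),
      0 < u < d -> M < v -> u <= v -> Rabs (RiemannInt pr - l) < eps.

Definition int01 (f : R -> R) : R := epsilon (inhabits 0) (int01_cv f).
Definition int0inf (f : R -> R) : R := epsilon (inhabits 0) (int0inf_cv f).

Definition Lfun (a : nat -> R) (j : nat) (x : R) : R :=
  series (fun k => a k ^ j * rpow x (a k) / (1 - rpow x (a k))).

Definition Ffun (a : nat -> R) (x : R) : R :=
  infprod (fun k => 1 - rpow x (a k)).

Definition FNfun (a : nat -> R) (N : nat) (x : R) : R :=
  fprod N (fun k => 1 - rpow x (a k)).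

Definition I_integrand (a : nat -> R) (j : nat) (x : R) : R :=
  / INR (fact (j - 1)) * (Lfun a j x * Ffun a x * Rabs (ln x) ^ (j - 1) / x).

Definition Ival (a : nat -> R) (j : nat) : R := int01 (I_integrand a j).

Definition EU_integrand (a : nat -> R) (j N : nat) (t : R) : R :=
  fsum N (fun k =>
    a k * exp (- (a k * t)) * (a k * t) ^ (j - 1) / INR (fact (j - 1)) *
    fprod N (fun i => if Nat.eq_dec i k then 1 else 1 - exp (- (a i * t)))).

Definition EU (a : nat -> R) (j N : nat) : R := int0inf (EU_integrand a j N).

From Stdlib Require Import Reals Lra Lia Arith Factorial Classical ClassicalEpsilon.
From Coquelicot Require Import Coquelicot.
Open Scope R_scope.

(* Substituting x = e^{-t} turns E[U_j^N] into the integral over (0,1) of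
   (j-1)!^{-1} L_N(x) F_N(x) |ln x|^{j-1} / x, where L_N is the N-th partial sum of the series L:
   the k-th summand of E[U_j^N] contributes a_k^j x^{a_k} |ln x|^{j-1} times F_N(x) / (1 - x^{a_k}).
   For N >= N0 we have L_N <= L and F_N <= F_{N0}, so the hypothesis provides an integrable majorant.
   Since x_alpha = 1, sum_k w^{a_k} converges for every w < 1; this makes L finite on (0,1) and
   bounds the tails of L and F uniformly on compact subintervals. Dominated convergence for improper
   Riemann integrals on (0,1) then yields both the existence of I(alpha;j) and the limit. *)

Lemma fsum_ext n u w : (forall k, (k < n)%nat -> u k = w k) -> fsum n u = fsum n w.
Proof.
  induction n as [|n IH]; simpl; intros Huw; auto.
  rewrite IH, Huw; auto; intros; apply Huw; lia.
Qed.

Lemma fprod_ext n u w : (forall k, (k < n)%nat -> u k = w k) -> fprod n u = fprod n w.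
Proof.
  induction n as [|n IH]; simpl; intros Huw; auto.
  rewrite IH, Huw; auto; intros; apply Huw; lia.
Qed.

Lemma fsum_ge0 n u : (forall k, 0 <= u k) -> 0 <= fsum n u.
Proof. intros Hu; induction n as [|n IH]; simpl; [lra|]. specialize (Hu n); lra. Qed.

Lemma fsum_le_n n m u : (forall k, 0 <= u k) -> (n <= m)%nat -> fsum n u <= fsum m u.
Proof. intros Hu Hnm; induction Hnm; simpl; [lra|]. specialize (Hu m); lra. Qed.

Lemma fsum_mulr n u c : fsum n (fun k => u k * c) = fsum n u * c.
Proof. induction n as [|n IH]; simpl; [ring|]. rewrite IH; ring. Qed.

Lemma fsum_sub_le n m u w : (forall k, u k <= w k) -> (n <= m)%nat ->
  fsum m u - fsum n u <= fsum m w - fsum n w.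
Proof. intros Huw Hnm; induction Hnm; simpl; [lra|]. specialize (Huw m); lra. Qed.

Lemma fsum_le_head_tail u w C K n : 0 <= C -> (forall k, 0 <= u k) -> (forall k, 0 <= w k) ->
  (forall k, (K <= k)%nat -> u k <= C * w k) -> fsum n u <= fsum K u + C * fsum n w.
Proof.
  intros HC Hu Hw Htail; induction n as [|n IH]; simpl.
  - pose proof (fsum_ge0 K u Hu); lra.
  - destruct (le_lt_dec K n) as [HKn|HnK].
    + specialize (Htail n HKn); nra.
    + pose proof (fsum_le_n (S n) K u Hu HnK) as Hhead; simpl in Hhead.
      pose proof (fsum_ge0 n w Hw); specialize (Hw n); nra.
Qed.

Lemma sum_f_R0_fsum u n : sum_f_R0 u n = fsum (S n) u.
Proof. induction n as [|n IH]; simpl; [ring|]. rewrite IH; simpl; ring. Qed.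

Lemma fprod_ge0 n u : (forall k, 0 <= u k) -> 0 <= fprod n u.
Proof. intros Hu; induction n; simpl; [lra|]. apply Rmult_le_pos; auto. Qed.

Lemma fprod_le1 n u : (forall k, 0 <= u k <= 1) -> fprod n u <= 1.
Proof.
  intros Hu; induction n as [|n IH]; simpl; [lra|].
  pose proof (fprod_ge0 n u (fun k => proj1 (Hu k))); destruct (Hu n); nra.
Qed.

Lemma fprod_le_n n m u : (forall k, 0 <= u k <= 1) -> (n <= m)%nat -> fprod m u <= fprod n u.
Proof.
  intros Hu Hnm; induction Hnm; simpl; [lra|].
  pose proof (fprod_ge0 m u (fun k => proj1 (Hu k))); destruct (Hu m); nra.
Qed.

Lemma fprod_omit_mul n k g : (k < n)%nat ->
  fprod n (fun i => if Nat.eq_dec i k then 1 else g i) * g k = fprod n g.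
Proof.
  induction n as [|n IH]; intros Hk; [lia|]; simpl.
  destruct (Nat.eq_dec n k) as [->|Hnk].
  - rewrite (fprod_ext k _ g); [ring|].
    intros i Hi; destruct (Nat.eq_dec i k); [lia|auto].
  - rewrite <- IH by lia; ring.
Qed.

Lemma Un_cv_const c : Un_cv (fun _ => c) c.
Proof. intros e He; exists 0%nat; intros n _; unfold Rdist; rewrite Rminus_eq_0, Rabs_R0; auto. Qed.

Lemma Un_cv_shift u l : Un_cv (fun n => u (S n)) l <-> Un_cv u l.
Proof.
  split; intros Hu e He; destruct (Hu e He) as [N HN].
  - exists (S N); intros [|n] Hn; [lia|]. apply HN; lia.
  - exists N; intros n Hn; apply HN; lia.
Qed.

Lemma Un_cv_le_eventually u l c N : Un_cv u l -> (forall n, (N <= n)%nat -> u n <= c) -> l <= c.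
Proof.
  intros Hu Hc; destruct (Rle_dec l c) as [|Hlc]; auto; exfalso.
  destruct (Hu (l - c)) as [M HM]; [lra|].
  specialize (HM (max M N) ltac:(lia)); specialize (Hc (max M N) ltac:(lia)).
  apply Rabs_def2 in HM; lra.
Qed.

Lemma Un_cv_ge_eventually u l c N : Un_cv u l -> (forall n, (N <= n)%nat -> c <= u n) -> c <= l.
Proof.
  intros Hu Hc; destruct (Rle_dec c l) as [|Hcl]; auto; exfalso.
  destruct (Hu (c - l)) as [M HM]; [lra|].
  specialize (HM (max M N) ltac:(lia)); specialize (Hc (max M N) ltac:(lia)).
  apply Rabs_def2 in HM; lra.
Qed.

Lemma seq_lim_eq u l : Un_cv u l -> seq_lim u = l.
Proof. intros Hu; apply (UL_sequence u); auto. unfold seq_lim; apply epsilon_spec; eauto. Qed.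

Lemma series_eq u l : Un_cv (fun n => fsum n u) l -> series u = l.
Proof. intros Hu; apply seq_lim_eq, (Un_cv_shift (fun n => fsum n u)); auto. Qed.

Lemma infprod_eq u l : Un_cv (fun n => fprod n u) l -> infprod u = l.
Proof. intros Hu; apply seq_lim_eq, (Un_cv_shift (fun n => fprod n u)); auto. Qed.

Lemma fsum_bounded_cv u B : (forall k, 0 <= u k) -> (forall n, fsum n u <= B) ->
  exists l, Un_cv (fun n => fsum n u) l.
Proof.
  intros Hu HB; destruct (growing_cv (fun n => fsum n u)) as [l Hl]; eauto.
  - intros n; simpl; specialize (Hu n); lra.
  - exists B; intros x [n ->]; auto.
Qed.

Lemma fsum_le_lim u l n : (forall k, 0 <= u k) -> Un_cv (fun n => fsum n u) l -> fsum n u <= l.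
Proof. intros Hu Hl; apply (Un_cv_ge_eventually _ _ _ n Hl); intros; apply fsum_le_n; auto. Qed.

(** * Real powers and the divergence abscissa *)

Lemma ln_lt0 x : 0 < x < 1 -> ln x < 0.
Proof. intros Hx; rewrite <- ln_1; apply ln_increasing; lra. Qed.

Lemma exp_neg_in_01 t : 0 < t -> 0 < exp (- t) < 1.
Proof. intros Ht; split; [apply exp_pos|]. rewrite <- exp_0; apply exp_increasing; lra. Qed.

Lemma exp_neg_le s t : s <= t -> exp (- t) <= exp (- s).
Proof. intros Hst; destruct (Req_dec s t) as [->|]; [lra|]. left; apply exp_increasing; lra. Qed.

Lemma rpow_exp_ln x p : 0 < x -> rpow x p = exp (p * ln x).
Proof. intros Hx; unfold rpow, Rpower; destruct (Rlt_dec 0 x); [auto|lra]. Qed.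

Lemma rpow_1 p : rpow 1 p = 1.
Proof. rewrite rpow_exp_ln by lra; rewrite ln_1, Rmult_0_r, exp_0; auto. Qed.

Lemma rpow_in_01 x p : 0 < x < 1 -> 0 < p -> 0 < rpow x p < 1.
Proof.
  intros Hx Hp; rewrite rpow_exp_ln by lra; split; [apply exp_pos|].
  rewrite <- exp_0; apply exp_increasing; pose proof (ln_lt0 x Hx); nra.
Qed.

Lemma rpow_le x y p : 0 < x <= y -> 0 < p -> rpow x p <= rpow y p.
Proof.
  intros Hxy Hp; rewrite !rpow_exp_ln by lra.
  destruct (Req_dec x y) as [->|]; [lra|].
  left; apply exp_increasing; pose proof (ln_increasing x y ltac:(lra) ltac:(lra)); nra.
Qed.

Lemma div_set_1 a : div_set a 1.
Proof.
  split; [lra|]; intros [l Hl].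
  destruct (Hl 1 Rlt_0_1) as [N HN].
  destruct (INR_archimed 1 (l + 1) Rlt_0_1) as [M HM].
  specialize (HN (N + M)%nat ltac:(lia)).
  replace (sum_f_R0 _ (N + M)) with (INR (S (N + M))) in HN.
  - apply Rabs_def2 in HN; rewrite S_INR, plus_INR in HN; pose proof (pos_INR N); lra.
  - rewrite sum_f_R0_fsum; generalize (S (N + M)); intros n.
    induction n as [|n IH]; simpl fsum; [auto|]. rewrite <- IH, rpow_1, S_INR; auto.
Qed.

Lemma div_set_inf_exists a : exists m, is_inf (div_set a) m.
Proof.
  set (E := fun y => div_set a (- y)).
  assert (HE : E (-1)) by (unfold E; replace (- -1) with 1 by lra; apply div_set_1).
  assert (HB : bound E) by (exists 0; intros y [Hy _]; lra).
  destruct (completeness E HB (ex_intro _ _ HE)) as [m [Hub Hlub]].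
  exists (- m); split.
  - intros x Hx; assert (HEx : E (- x)) by (unfold E; rewrite Ropp_involutive; auto).
    specialize (Hub _ HEx); lra.
  - intros b Hb; enough (m <= - b) by lra.
    apply Hlub; intros y Hy; specialize (Hb _ Hy); lra.
Qed.

Lemma rpow_summable a w : x_alpha a = 1 -> 0 < w < 1 ->
  exists S, Un_cv (fun n => fsum n (fun k => rpow w (a k))) S.
Proof.
  intros Hx Hw.
  assert (Hinf1 : is_inf (div_set a) 1).
  { rewrite <- Hx; unfold x_alpha; apply epsilon_spec, div_set_inf_exists. }
  destruct (classic (exists l, infinite_sum (fun k => rpow w (a k)) l)) as [[l Hl]|Hdiv].
  - exists l; apply Un_cv_shift; intros e He; destruct (Hl e He) as [N HN].
    exists N; intros n Hn; rewrite <- sum_f_R0_fsum; apply HN; auto.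
  - assert (Hw_div : div_set a w) by (split; [lra|auto]).
    pose proof (proj1 Hinf1 w Hw_div); lra.
Qed.

Lemma pow_div_le_exp n z : 0 <= z -> (z / INR n) ^ n <= exp z.
Proof.
  intros Hz; destruct n as [|n]; [simpl; pose proof (exp_ineq1_le z); lra|].
  assert (Hn : 0 < INR (S n)) by (apply lt_0_INR; lia).
  apply Rle_trans with (exp (z / INR (S n)) ^ S n).
  - apply pow_incr; split; [apply Rdiv_le_0_compat; lra|].
    pose proof (exp_ineq1_le (z / INR (S n))); lra.
  - rewrite <- Rpower_pow by apply exp_pos; unfold Rpower; rewrite ln_exp.
    right; f_equal; field; lra.
Qed.

Lemma pow_le_exp j b c : 0 < c -> 0 <= b -> b ^ j <= (INR j / c) ^ j * exp (c * b).
Proof.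
  intros Hc Hb; destruct j as [|n]; [simpl; pose proof (exp_ineq1_le (c * b)); nra|].
  assert (Hn : 0 < INR (S n)) by (apply lt_0_INR; lia).
  replace (b ^ S n) with ((INR (S n) / c) ^ S n * (c * b / INR (S n)) ^ S n)
    by (rewrite <- Rpow_mult_distr; f_equal; field; lra).
  apply Rmult_le_compat_l; [apply pow_le, Rdiv_le_0_compat; lra|].
  apply pow_div_le_exp; nra.
Qed.

(** * The series L and the product F *)

Definition Lterm (a : nat -> R) (j : nat) (x : R) (k : nat) : R :=
  a k ^ j * rpow x (a k) / (1 - rpow x (a k)).

Section Lseries.
Variables (a : nat -> R) (j : nat).
Hypothesis Hpos : forall k, 0 < a k.

Lemma Lterm_ge0 x k : 0 < x < 1 -> 0 <= Lterm a j x k.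
Proof.
  intros Hx; unfold Lterm; pose proof (rpow_in_01 x (a k) Hx (Hpos k)).
  pose proof (pow_le (a k) j (Rlt_le _ _ (Hpos k))).
  apply Rdiv_le_0_compat; [apply Rmult_le_pos|]; lra.
Qed.

Lemma Lterm_le x y k : 0 < x <= y -> y < 1 -> Lterm a j x k <= Lterm a j y k.
Proof.
  intros Hxy Hy; unfold Lterm.
  pose proof (rpow_in_01 x (a k) ltac:(lra) (Hpos k)).
  pose proof (rpow_in_01 y (a k) ltac:(lra) (Hpos k)).
  pose proof (rpow_le x y (a k) Hxy (Hpos k)).
  pose proof (pow_le (a k) j (Rlt_le _ _ (Hpos k))).
  set (p := rpow x (a k)) in *; set (q := rpow y (a k)) in *.
  unfold Rdiv; rewrite !Rmult_assoc; apply Rmult_le_compat_l; auto.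
  replace (p * / (1 - p)) with (/ (1 - p) - 1) by (field; lra).
  replace (q * / (1 - q)) with (/ (1 - q) - 1) by (field; lra).
  apply Rplus_le_compat_r, Rinv_le_contravar; lra.
Qed.

Hypothesis Hinf : cv_infty a.

(* Once a_k >= 1: a_k^j v^{a_k} = (a_k^j (v/w)^{a_k}) w^{a_k}, and the bracket is bounded
   since polynomials lose to exponentials. *)
Lemma Lterm_le_geometric v w : 0 < v < w -> w < 1 ->
  exists C K, 0 <= C /\ forall k, (K <= k)%nat -> Lterm a j v k <= C * rpow w (a k).
Proof.
  intros Hvw Hw.
  set (c := ln w - ln v).
  assert (Hc : 0 < c) by (unfold c; pose proof (ln_increasing v w ltac:(lra) ltac:(lra)); lra).
  set (D := (INR j / c) ^ j).
  assert (HD : 0 <= D) by (apply pow_le, Rdiv_le_0_compat; [apply pos_INR|lra]).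
  destruct (Hinf 1) as [K HK].
  exists (D / (1 - v)), K; split; [apply Rdiv_le_0_compat; lra|].
  intros k Hk; specialize (HK k Hk); unfold Lterm; set (b := a k) in *.
  assert (Hwb : 0 < rpow w b < 1) by (apply rpow_in_01; lra).
  assert (Hvb : rpow v b <= v).
  { rewrite rpow_exp_ln by lra; rewrite <- (exp_ln v) at 2 by lra.
    apply Rlt_le, exp_increasing; pose proof (ln_lt0 v ltac:(lra)); nra. }
  assert (Hsplit : rpow v b = rpow w b * exp (- (c * b))).
  { rewrite !rpow_exp_ln by lra; rewrite <- exp_plus; f_equal; unfold c; ring. }
  assert (Hpoly : b ^ j * exp (- (c * b)) <= D).
  { apply Rmult_le_reg_r with (exp (c * b)); [apply exp_pos|].
    rewrite Rmult_assoc, <- exp_plus, Rplus_opp_l, exp_0, Rmult_1_r.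
    apply pow_le_exp; lra. }
  assert (Hnum : b ^ j * rpow v b <= D * rpow w b).
  { rewrite Hsplit, <- Rmult_assoc, (Rmult_comm (b ^ j)), Rmult_assoc, (Rmult_comm (rpow w b)).
    apply Rmult_le_compat_r; lra. }
  assert (Hden : / (1 - rpow v b) <= / (1 - v)).
  { pose proof (rpow_in_01 v b ltac:(lra) ltac:(lra)); apply Rinv_le_contravar; lra. }
  unfold Rdiv; replace (D * / (1 - v) * rpow w b) with (D * rpow w b * / (1 - v)) by ring.
  apply Rmult_le_compat; auto.
  - pose proof (rpow_in_01 v b ltac:(lra) ltac:(lra)); pose proof (pow_le b j); apply Rmult_le_pos; lra.
  - pose proof (rpow_in_01 v b ltac:(lra) ltac:(lra)); apply Rlt_le, Rinv_0_lt_compat; lra.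
Qed.

Hypothesis Hx : x_alpha a = 1.

Lemma Lfun_cv x : 0 < x < 1 -> Un_cv (fun n => fsum n (Lterm a j x)) (Lfun a j x).
Proof.
  intros Hx01; set (w := (1 + x) / 2).
  destruct (Lterm_le_geometric x w ltac:(unfold w; lra) ltac:(unfold w; lra)) as [C [K [HC HK]]].
  destruct (rpow_summable a w Hx ltac:(unfold w; lra)) as [S HS].
  assert (Hw : forall k, 0 <= rpow w (a k))
    by (intros k; pose proof (rpow_in_01 w (a k) ltac:(unfold w; lra) (Hpos k)); lra).
  destruct (fsum_bounded_cv (Lterm a j x) (fsum K (Lterm a j x) + C * S)) as [l Hl].
  - intros k; apply Lterm_ge0; auto.
  - intros n; eapply Rle_trans.
    + apply (fsum_le_head_tail _ (fun k => rpow w (a k)) C K); auto. intros; apply Lterm_ge0; auto.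
    + pose proof (fsum_le_lim _ S n Hw HS); nra.
  - unfold Lfun; rewrite (series_eq _ l); auto.
Qed.

Lemma Lfun_tail_le x v N : 0 < x <= v -> v < 1 ->
  0 <= Lfun a j x - fsum N (Lterm a j x) <= Lfun a j v - fsum N (Lterm a j v).
Proof.
  intros Hxv Hv.
  pose proof (Lfun_cv x ltac:(lra)) as HLx; pose proof (Lfun_cv v ltac:(lra)) as HLv.
  split.
  - pose proof (fsum_le_lim _ _ N (fun k => Lterm_ge0 x k ltac:(lra)) HLx); lra.
  - apply (Un_cv_le_eventually _ _ _ N (CV_minus _ _ _ _ HLx (Un_cv_const (fsum N (Lterm a j x))))).
    intros n Hn; eapply Rle_trans.
    + apply (fsum_sub_le N n (Lterm a j x) (Lterm a j v)); auto. intros; apply Lterm_le; auto.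
    + pose proof (fsum_le_lim _ _ n (fun k => Lterm_ge0 v k ltac:(lra)) HLv); lra.
Qed.

Lemma Lfun_ge0 x : 0 < x < 1 -> 0 <= Lfun a j x.
Proof. intros Hx01; pose proof (Lfun_tail_le x x 0 ltac:(lra) ltac:(lra)); simpl in *; lra. Qed.

Lemma Lfun_le x v : 0 < x <= v -> v < 1 -> Lfun a j x <= Lfun a j v.
Proof. intros Hxv Hv; pose proof (Lfun_tail_le x v 0 Hxv Hv); simpl in *; lra. Qed.

Lemma fsum_Lterm_le_Lfun x N : 0 < x < 1 -> fsum N (Lterm a j x) <= Lfun a j x.
Proof. intros Hx01; pose proof (Lfun_tail_le x x N ltac:(lra) ltac:(lra)); lra. Qed.

End Lseries.

Section Fproduct.
Variable a : nat -> R.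
Hypothesis Hpos : forall k, 0 < a k.

Lemma FNfun_factor_in_01 x k : 0 < x < 1 -> 0 <= 1 - rpow x (a k) <= 1.
Proof. intros Hx; pose proof (rpow_in_01 x (a k) Hx (Hpos k)); lra. Qed.

Lemma FNfun_ge0 x N : 0 < x < 1 -> 0 <= FNfun a N x.
Proof. intros Hx; apply fprod_ge0; intros k; apply (FNfun_factor_in_01 x k Hx). Qed.

Lemma FNfun_le1 x N : 0 < x < 1 -> FNfun a N x <= 1.
Proof. intros Hx; apply fprod_le1; intros k; apply (FNfun_factor_in_01 x k Hx). Qed.

Lemma FNfun_le_n x N M : 0 < x < 1 -> (N <= M)%nat -> FNfun a M x <= FNfun a N x.
Proof. intros Hx HNM; apply fprod_le_n; auto; intros k; apply (FNfun_factor_in_01 x k Hx). Qed.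

Lemma FNfun_cv x : 0 < x < 1 -> Un_cv (fun n => FNfun a n x) (Ffun a x).
Proof.
  intros Hx; destruct (decreasing_cv (fun n => FNfun a n x)) as [l Hl].
  - intros n; apply FNfun_le_n; auto.
  - exists 0; intros y [n ->]; unfold opp_seq; pose proof (FNfun_ge0 x n Hx); lra.
  - unfold Ffun; rewrite (infprod_eq _ l); auto.
Qed.

Lemma Ffun_le_FNfun x N : 0 < x < 1 -> Ffun a x <= FNfun a N x.
Proof.
  intros Hx; apply (Un_cv_le_eventually _ _ _ N (FNfun_cv x Hx)); intros; apply FNfun_le_n; auto.
Qed.

Lemma Ffun_ge0 x : 0 < x < 1 -> 0 <= Ffun a x.
Proof.
  intros Hx; apply (Un_cv_ge_eventually _ _ _ 0 (FNfun_cv x Hx)); intros; apply FNfun_ge0; auto.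
Qed.

Lemma FNfun_sub_le x N M : 0 < x < 1 -> (N <= M)%nat ->
  FNfun a N x - FNfun a M x <= fsum M (fun k => rpow x (a k)) - fsum N (fun k => rpow x (a k)).
Proof.
  intros Hx HNM; induction HNM as [|M HNM IH]; [lra|].
  change (FNfun a (S M) x) with (FNfun a M x * (1 - rpow x (a M))); simpl fsum.
  pose proof (FNfun_ge0 x M Hx); pose proof (FNfun_le1 x M Hx).
  pose proof (rpow_in_01 x (a M) Hx (Hpos M)); nra.
Qed.

Lemma Ffun_tail_le x v S N : 0 < x <= v -> v < 1 ->
  Un_cv (fun n => fsum n (fun k => rpow v (a k))) S ->
  0 <= FNfun a N x - Ffun a x <= S - fsum N (fun k => rpow v (a k)).
Proof.
  intros Hxv Hv HS; split; [pose proof (Ffun_le_FNfun x N ltac:(lra)); lra|].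
  apply (Un_cv_le_eventually _ _ _ N
           (CV_minus _ _ _ _ (Un_cv_const (FNfun a N x)) (FNfun_cv x ltac:(lra)))).
  intros M HM; eapply Rle_trans; [apply FNfun_sub_le; auto; lra|].
  eapply Rle_trans; [apply (fsum_sub_le N M _ (fun k => rpow v (a k))); auto|].
  - intros k; apply rpow_le; auto.
  - assert (Hv0 : forall k, 0 <= rpow v (a k))
      by (intros k; pose proof (rpow_in_01 v (a k) ltac:(lra) (Hpos k)); lra).
    pose proof (fsum_le_lim _ _ M Hv0 HS); lra.
Qed.

End Fproduct.

(** * Improper Riemann integrals on (0, 1) *)

Definition loc_int01 (f : R -> R) : Prop :=
  forall u v, 0 < u -> u <= v -> v < 1 -> ex_RInt f u v.

Definition is_RInt01 (f : R -> R) (l : R) : Prop :=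
  loc_int01 f /\
  forall eps, 0 < eps -> exists d, 0 < d /\
    forall u v, 0 < u < d -> 1 - d < v < 1 -> u <= v -> Rabs (RInt f u v - l) < eps.

Lemma int01_cv_iff f l : int01_cv f l <-> is_RInt01 f l.
Proof.
  split; intros [Hint Hlim]; split.
  - intros u v Hu Huv Hv; destruct (Hint u v Hu Huv Hv) as [pr]; apply ex_RInt_Reals_1; auto.
  - intros eps Heps; destruct (Hlim eps Heps) as [d [Hd Hclose]]; exists d; split; auto.
    intros u v Hu Hv Huv; destruct (Hint u v ltac:(lra) Huv ltac:(lra)) as [pr].
    rewrite (RInt_Reals f u v pr); apply Hclose; auto.
  - intros u v Hu Huv Hv; constructor; apply ex_RInt_Reals_0; auto.
  - intros eps Heps; destruct (Hlim eps Heps) as [d [Hd Hclose]]; exists d; split; auto.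
    intros u v pr Hu Hv Huv; rewrite <- (RInt_Reals f u v pr); apply Hclose; auto.
Qed.

Lemma small_pos_below d1 d2 : 0 < d1 -> 0 < d2 -> exists d, 0 < d /\ d <= d1 /\ d <= d2 /\ d <= 1 / 2.
Proof.
  intros Hd1 Hd2; exists (Rmin (Rmin d1 d2) (1 / 2)).
  pose proof (Rmin_l (Rmin d1 d2) (1 / 2)); pose proof (Rmin_r (Rmin d1 d2) (1 / 2)).
  pose proof (Rmin_l d1 d2); pose proof (Rmin_r d1 d2).
  repeat split; try lra. repeat apply Rmin_pos; lra.
Qed.

Lemma is_RInt01_unique f l1 l2 : is_RInt01 f l1 -> is_RInt01 f l2 -> l1 = l2.
Proof.
  intros [_ H1] [_ H2]; apply Rminus_diag_uniq, Rabs_eq_0.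
  destruct (Rle_lt_or_eq_dec 0 (Rabs (l1 - l2)) (Rabs_pos _)) as [Hgap|]; auto; exfalso.
  set (e := Rabs (l1 - l2) / 2).
  destruct (H1 e ltac:(unfold e; lra)) as [d1 [Hd1 P1]].
  destruct (H2 e ltac:(unfold e; lra)) as [d2 [Hd2 P2]].
  destruct (small_pos_below d1 d2 Hd1 Hd2) as [d [Hd [Hdd1 [Hdd2 Hd12]]]].
  specialize (P1 (d / 2) (1 - d / 2) ltac:(lra) ltac:(lra) ltac:(lra)).
  specialize (P2 (d / 2) (1 - d / 2) ltac:(lra) ltac:(lra) ltac:(lra)).
  set (I := RInt f (d / 2) (1 - d / 2)) in *.
  assert (Rabs (l1 - l2) <= Rabs (I - l2) + Rabs (I - l1)).
  { replace (l1 - l2) with ((I - l2) - (I - l1)) by ring.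
    eapply Rle_trans; [apply Rabs_triang|]; rewrite Rabs_Ropp; lra. }
  unfold e in *; lra.
Qed.

Lemma is_RInt01_scal f l c : is_RInt01 f l -> is_RInt01 (fun x => c * f x) (c * l).
Proof.
  intros [Hint Hlim]; split.
  - intros u v Hu Huv Hv; apply (ex_RInt_scal f u v c), Hint; auto.
  - intros eps Heps; set (e := eps / (Rabs c + 1)).
    assert (He : 0 < e) by (unfold e; apply Rdiv_lt_0_compat; pose proof (Rabs_pos c); lra).
    destruct (Hlim e He) as [d [Hd Hclose]]; exists d; split; auto.
    intros u v Hu Hv Huv.
    assert (Hscal : RInt (fun x => c * f x) u v = c * RInt f u v)
      by exact (RInt_scal f u v c (Hint u v ltac:(lra) Huv ltac:(lra))).
    rewrite Hscal; replace (c * RInt f u v - c * l) with (c * (RInt f u v - l)) by ring.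
    rewrite Rabs_mult; specialize (Hclose u v Hu Hv Huv).
    apply Rle_lt_trans with (Rabs c * e); [apply Rmult_le_compat_l; [apply Rabs_pos|lra]|].
    unfold e; apply Rmult_lt_reg_r with (Rabs c + 1); [pose proof (Rabs_pos c); lra|].
    field_simplify; pose proof (Rabs_pos c); lra.
Qed.

Lemma RInt_split3 k u u0 v0 v : loc_int01 k -> 0 < u -> u <= u0 -> u0 <= v0 -> v0 <= v -> v < 1 ->
  RInt k u v = RInt k u u0 + RInt k u0 v0 + RInt k v0 v.
Proof.
  intros Hk Hu Huu0 Hu0v0 Hv0v Hv.
  rewrite <- (RInt_Chasles k u u0 v), <- (RInt_Chasles k u0 v0 v); try (apply Hk; lra).
  unfold plus; simpl; ring.
Qed.

Section Domination.
Variables g h : R -> R.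
Hypothesis Hg : loc_int01 g.
Hypothesis Hh : loc_int01 h.
Hypothesis Hgh : forall x, 0 < x < 1 -> 0 <= g x <= h x.

Lemma RInt_tails_le u u0 v0 v : 0 < u -> u <= u0 -> u0 <= v0 -> v0 <= v -> v < 1 ->
  0 <= RInt g u v - RInt g u0 v0 <= RInt h u v - RInt h u0 v0.
Proof.
  intros Hu Huu0 Hu0v0 Hv0v Hv.
  rewrite (RInt_split3 g u u0 v0 v), (RInt_split3 h u u0 v0 v) by auto.
  assert (0 <= RInt g u u0) by (apply RInt_ge_0; auto; [apply Hg; lra|intros; apply Hgh; lra]).
  assert (0 <= RInt g v0 v) by (apply RInt_ge_0; auto; [apply Hg; lra|intros; apply Hgh; lra]).
  assert (RInt g u u0 <= RInt h u u0)
    by (apply RInt_le; auto; [apply Hg; lra|apply Hh; lra|intros; apply Hgh; lra]).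
  assert (RInt g v0 v <= RInt h v0 v)
    by (apply RInt_le; auto; [apply Hg; lra|apply Hh; lra|intros; apply Hgh; lra]).
  lra.
Qed.

Lemma is_RInt01_tails_le L l u0 v0 : is_RInt01 g L -> is_RInt01 h l -> 0 < u0 -> u0 <= v0 -> v0 < 1 ->
  0 <= L - RInt g u0 v0 <= l - RInt h u0 v0.
Proof.
  intros [_ HL] [_ Hl] Hu0 Hu0v0 Hv0.
  assert (Happrox : forall eps, 0 < eps -> - eps <= L - RInt g u0 v0 <= l - RInt h u0 v0 + 2 * eps).
  { intros eps Heps.
    destruct (HL eps Heps) as [d1 [Hd1 P1]]; destruct (Hl eps Heps) as [d2 [Hd2 P2]].
    destruct (small_pos_below d1 d2 Hd1 Hd2) as [d [Hd [Hdd1 [Hdd2 _]]]].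
    set (u := Rmin (d / 2) u0); set (v := Rmax (1 - d / 2) v0).
    assert (0 < u /\ u < d /\ u <= u0)
      by (unfold u; pose proof (Rmin_l (d / 2) u0); pose proof (Rmin_r (d / 2) u0);
          repeat split; try lra; apply Rmin_pos; lra).
    assert (1 - d < v /\ v < 1 /\ v0 <= v)
      by (unfold v; pose proof (Rmax_l (1 - d / 2) v0); pose proof (Rmax_r (1 - d / 2) v0);
          repeat split; try lra; apply Rmax_lub_lt; lra).
    specialize (P1 u v ltac:(lra) ltac:(lra) ltac:(lra)); apply Rabs_def2 in P1.
    specialize (P2 u v ltac:(lra) ltac:(lra) ltac:(lra)); apply Rabs_def2 in P2.
    pose proof (RInt_tails_le u u0 v0 v ltac:(lra) ltac:(lra) Hu0v0 ltac:(lra) ltac:(lra)); lra. }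
  split.
  - destruct (Rle_dec 0 (L - RInt g u0 v0)); auto; exfalso.
    specialize (Happrox (- (L - RInt g u0 v0) / 2) ltac:(lra)); lra.
  - destruct (Rle_dec (L - RInt g u0 v0) (l - RInt h u0 v0)); auto; exfalso.
    specialize (Happrox (((L - RInt g u0 v0) - (l - RInt h u0 v0)) / 4) ltac:(lra)); lra.
Qed.

End Domination.

Lemma RInt_le_is_RInt01 h l u v : is_RInt01 h l -> (forall x, 0 < x < 1 -> 0 <= h x) ->
  0 < u -> u <= v -> v < 1 -> RInt h u v <= l.
Proof.
  intros Hhl Hh0 Hu Huv Hv.
  pose proof (is_RInt01_tails_le h h (proj1 Hhl) (proj1 Hhl) (fun x Hx => conj (Hh0 x Hx) (Rle_refl _))
                l l u v Hhl Hhl Hu Huv Hv); lra.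
Qed.

(* The limit is the supremum of the integrals over compact subintervals, which increase with
   the interval. *)
Lemma is_RInt01_of_bounded g B : loc_int01 g -> (forall x, 0 < x < 1 -> 0 <= g x) ->
  (forall u v, 0 < u -> u <= v -> v < 1 -> RInt g u v <= B) -> exists L, is_RInt01 g L.
Proof.
  intros Hg Hg0 HB.
  set (E := fun y => exists u v, 0 < u /\ u <= v /\ v < 1 /\ y = RInt g u v).
  assert (HE : E (RInt g (1 / 2) (1 / 2))) by (exists (1 / 2), (1 / 2); repeat split; lra).
  assert (Hbound : bound E) by (exists B; intros y (u & v & Hu & Huv & Hv & ->); auto).
  destruct (completeness E Hbound (ex_intro _ _ HE)) as [L [Hub Hlub]].
  exists L; split; auto; intros eps Heps.
  destruct (classic (exists y, E y /\ L - eps < y))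
    as [(y & (u0 & v0 & Hu0 & Hu0v0 & Hv0 & ->) & Hy)|Hnone].
  - exists (Rmin u0 (1 - v0)); split; [apply Rmin_pos; lra|].
    intros u v Hu Hv Huv; pose proof (Rmin_l u0 (1 - v0)); pose proof (Rmin_r u0 (1 - v0)).
    pose proof (RInt_tails_le g g Hg Hg (fun x Hx => conj (Hg0 x Hx) (Rle_refl _))
                  u u0 v0 v ltac:(lra) ltac:(lra) Hu0v0 ltac:(lra) ltac:(lra)).
    assert (RInt g u v <= L) by (apply Hub; exists u, v; repeat split; lra).
    apply Rabs_def1; lra.
  - exfalso; enough (L <= L - eps) by lra.
    apply Hlub; intros y Hy; destruct (Rle_dec y (L - eps)); auto.
    exfalso; apply Hnone; exists y; split; auto; lra.
Qed.

Lemma is_RInt01_dominated g h l : loc_int01 g -> (forall x, 0 < x < 1 -> 0 <= g x <= h x) ->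
  is_RInt01 h l -> exists L, is_RInt01 g L.
Proof.
  intros Hg Hgh Hhl; apply (is_RInt01_of_bounded g l Hg); [intros x Hx; apply Hgh; auto|].
  intros u v Hu Huv Hv; eapply Rle_trans.
  - apply (RInt_le g h u v Huv (Hg u v Hu Huv Hv) (proj1 Hhl u v Hu Huv Hv)); intros; apply Hgh; lra.
  - apply (RInt_le_is_RInt01 h l u v Hhl); auto; intros x Hx; pose proof (Hgh x Hx); lra.
Qed.

Definition unif_cvg_on (fs : nat -> R -> R) (f : R -> R) (u v : R) : Prop :=
  forall eps, 0 < eps -> exists M, forall N x, (M <= N)%nat -> u <= x <= v -> Rabs (fs N x - f x) <= eps.

Lemma unif_cvg_on_of_bound (fs : nat -> R -> R) (f : R -> R) u v (b : nat -> R) :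
  (forall N x, u <= x <= v -> Rabs (fs N x - f x) <= b N) -> Un_cv b 0 -> unif_cvg_on fs f u v.
Proof.
  intros Hb Hb0 eps Heps; destruct (Hb0 eps Heps) as [M HM]; exists M.
  intros N x HN Hx; specialize (HM N HN); unfold Rdist in HM; rewrite Rminus_0_r in HM.
  pose proof (Hb N x Hx); pose proof (Rle_abs (b N)); lra.
Qed.

(* Clamping to [u, v] turns uniform convergence on [u, v] into convergence in Coquelicot's
   uniform space of functions. *)
Lemma ex_RInt_unif_lim (fs : nat -> R -> R) (f : R -> R) u v :
  u <= v -> (forall N, ex_RInt (fs N) u v) -> unif_cvg_on fs f u v -> ex_RInt f u v.
Proof.
  intros Huv Hint Hunif.
  set (cl := fun x => Rmax u (Rmin v x)).
  assert (Hcl : forall x, u <= x <= v -> cl x = x)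
    by (intros x Hx; unfold cl; rewrite Rmin_right, Rmax_right; lra).
  assert (Hcl_in : forall x, u <= cl x <= v)
    by (intros x; unfold cl; split; [apply Rmax_l|apply Rmax_lub; [lra|apply Rmin_l]]).
  set (gs := fun N x => fs N (cl x)); set (G := fun x => f (cl x)).
  assert (Hgs : forall N, is_RInt (gs N) u v (RInt (fs N) u v)).
  { intros N; apply is_RInt_ext with (fs N).
    - intros x Hx; rewrite Rmin_left, Rmax_right in Hx by auto; unfold gs; rewrite Hcl; lra.
    - apply (RInt_correct (V := R_CompleteNormedModule)); auto. }
  assert (Hlim : filterlim gs eventually (@locally (fct_UniformSpace R R_UniformSpace) G)).
  { apply filterlim_locally; intros [eps Heps]; destruct (Hunif (eps / 2)) as [M HM]; [simpl; lra|].
    exists M; intros N HN t; change (Rabs (gs N t - G t) < eps).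
    specialize (HM N (cl t) HN (Hcl_in t)); unfold gs, G; simpl in *; lra. }
  destruct (filterlim_RInt (V := R_CompleteNormedModule) gs u v eventually eventually_filter G
              (fun N => RInt (fs N) u v) Hgs Hlim) as [If [_ HIf]].
  apply ex_RInt_ext with G; [|exists If; auto].
  intros x Hx; rewrite Rmin_left, Rmax_right in Hx by auto; unfold G; rewrite Hcl; lra.
Qed.

Lemma Rabs_RInt_sub_le (f g : R -> R) u v e : u <= v -> ex_RInt f u v -> ex_RInt g u v ->
  (forall x, u <= x <= v -> Rabs (f x - g x) <= e) -> Rabs (RInt f u v - RInt g u v) <= (v - u) * e.
Proof.
  intros Huv Hf Hg Hfg.
  assert (Hsub : ex_RInt (fun x => f x - g x) u v)
    by exact (ex_RInt_minus (V := R_NormedModule) _ _ _ _ Hf Hg).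
  assert (Heq : RInt (fun x => f x - g x) u v = RInt f u v - RInt g u v)
    by exact (RInt_minus (V := R_CompleteNormedModule) _ _ _ _ Hf Hg).
  rewrite <- Heq; apply (abs_RInt_le_const (fun x => f x - g x) u v e); auto.
Qed.

(* The common majorant h makes the tails near 0 and 1 uniformly small,
   and on the remaining compact interval the convergence is uniform. *)
Lemma is_RInt01_dominated_cvg (fs : nat -> R -> R) f h l N0 L (LN : nat -> R) :
  (forall N x, (N0 <= N)%nat -> 0 < x < 1 -> 0 <= fs N x <= h x) ->
  (forall x, 0 < x < 1 -> 0 <= f x <= h x) ->
  is_RInt01 h l ->
  (forall u v, 0 < u -> u <= v -> v < 1 -> unif_cvg_on fs f u v) ->
  is_RInt01 f L -> (forall N, (N0 <= N)%nat -> is_RInt01 (fs N) (LN N)) ->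
  Un_cv LN L.
Proof.
  intros Hfs Hf Hhl Hunif HfL HLN eps Heps.
  destruct (proj2 Hhl (eps / 4) ltac:(lra)) as [d [Hd Htail]].
  destruct (small_pos_below d d Hd Hd) as [d' [Hd' [Hdd' [_ Hd'2]]]].
  set (u0 := d' / 2); set (v0 := 1 - d' / 2).
  assert (Hu0 : 0 < u0) by (unfold u0; lra); assert (Hv0 : v0 < 1) by (unfold v0; lra).
  assert (Hu0v0 : u0 <= v0) by (unfold u0, v0; lra).
  specialize (Htail u0 v0 ltac:(unfold u0; lra) ltac:(unfold v0; lra) Hu0v0).
  apply Rabs_def2 in Htail.
  destruct (Hunif u0 v0 Hu0 Hu0v0 Hv0 (eps / 4) ltac:(lra)) as [M HM].
  exists (max M N0); intros N HN; unfold Rdist.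
  pose proof (is_RInt01_tails_le (fs N) h (proj1 (HLN N ltac:(lia))) (proj1 Hhl)
                (fun x Hx => Hfs N x ltac:(lia) Hx) _ l u0 v0 (HLN N ltac:(lia)) Hhl Hu0 Hu0v0 Hv0).
  pose proof (is_RInt01_tails_le f h (proj1 HfL) (proj1 Hhl) Hf L l u0 v0 HfL Hhl Hu0 Hu0v0 Hv0).
  assert (Hmid : Rabs (RInt (fs N) u0 v0 - RInt f u0 v0) <= (v0 - u0) * (eps / 4)).
  { apply Rabs_RInt_sub_le; auto.
    - apply (proj1 (HLN N ltac:(lia))); auto.
    - apply (proj1 HfL); auto.
    - intros x Hx; apply HM; auto; lia. }
  assert ((v0 - u0) * (eps / 4) <= eps / 4) by (unfold u0, v0; nra).
  apply Rabs_le_between in Hmid; apply Rabs_def1; lra.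
Qed.

Lemma continuous_Rmult (f g : R -> R) x :
  continuous f x -> continuous g x -> continuous (fun y => f y * g y) x.
Proof. intros Hf Hg; exact (continuous_mult f g x Hf Hg). Qed.

Lemma continuous_Rplus (f g : R -> R) x :
  continuous f x -> continuous g x -> continuous (fun y => f y + g y) x.
Proof. intros Hf Hg; exact (continuous_plus (V := R_NormedModule) f g x Hf Hg). Qed.

Lemma continuous_Rminus (f g : R -> R) x :
  continuous f x -> continuous g x -> continuous (fun y => f y - g y) x.
Proof. intros Hf Hg; exact (continuous_minus (V := R_NormedModule) f g x Hf Hg). Qed.

Lemma continuous_Rconst (c x : R) : continuous (fun _ : R => c) x.
Proof. exact (continuous_const (U := R_UniformSpace) (V := R_UniformSpace) c x). Qed.

Lemma continuous_Rdiv (f g : R -> R) x : continuous f x -> continuous g x -> g x <> 0 ->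
  continuous (fun y => f y / g y) x.
Proof. intros Hf Hg Hgx; apply continuous_Rmult, continuous_Rinv_comp; auto. Qed.

Lemma continuous_Rpow (f : R -> R) n x : continuous f x -> continuous (fun y => f y ^ n) x.
Proof. intros Hf; induction n; simpl; [apply continuous_Rconst|apply continuous_Rmult; auto]. Qed.

Lemma continuous_fsum n (G : nat -> R -> R) x : (forall k, continuous (G k) x) ->
  continuous (fun y => fsum n (fun k => G k y)) x.
Proof. intros HG; induction n; simpl; [apply continuous_Rconst|apply continuous_Rplus; auto]. Qed.

Lemma continuous_fprod n (G : nat -> R -> R) x : (forall k, continuous (G k) x) ->
  continuous (fun y => fprod n (fun k => G k y)) x.
Proof. intros HG; induction n; simpl; [apply continuous_Rconst|apply continuous_Rmult; auto]. Qed.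

Lemma continuous_rpow p x : 0 < x -> continuous (fun y => rpow y p) x.
Proof.
  intros Hx; apply continuous_ext_loc with (fun y => exp (p * ln y)).
  - exists (mkposreal x Hx); intros y Hy; change (Rabs (y - x) < x) in Hy.
    apply Rabs_def2 in Hy; rewrite rpow_exp_ln; auto; lra.
  - apply continuous_exp_comp, continuous_Rmult; [apply continuous_Rconst|apply continuous_ln; auto].
Qed.

Lemma ln_weight_bounds u x n : 0 < u <= x -> x < 1 ->
  0 <= Rabs (ln x) ^ n / x <= Rabs (ln u) ^ n / u.
Proof.
  intros Hux Hx.
  assert (Hln : ln u <= ln x)
    by (destruct (Req_dec u x) as [->|]; [lra|left; apply ln_increasing; lra]).
  pose proof (ln_lt0 x ltac:(lra)).
  rewrite (Rabs_left (ln x)), (Rabs_left (ln u)) by lra.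
  split; [apply Rdiv_le_0_compat; [apply pow_le|]; lra|].
  unfold Rdiv; apply Rmult_le_compat; [apply pow_le; lra|apply Rlt_le, Rinv_0_lt_compat; lra| |].
  - apply pow_incr; lra.
  - apply Rinv_le_contravar; lra.
Qed.

Lemma integrand_le c A B A' B' w x : 0 <= c -> 0 <= A <= A' -> 0 <= B <= B' -> 0 <= w -> 0 < x ->
  0 <= c * (A * B * w / x) <= c * (A' * B' * w / x).
Proof.
  intros Hc HA HB Hw Hx; pose proof (Rinv_0_lt_compat x Hx); unfold Rdiv; split.
  - apply Rmult_le_pos; auto; repeat apply Rmult_le_pos; lra.
  - apply Rmult_le_compat_l, Rmult_le_compat_r, Rmult_le_compat_r, Rmult_le_compat; lra.
Qed.

Lemma Rabs_mul_sub_le A A' B B' : 0 <= A' <= A -> 0 <= B <= B' -> B' <= 1 ->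
  Rabs (A' * B' - A * B) <= (A - A') + A * (B' - B).
Proof.
  intros HA HB HB'; apply Rabs_le; split; nra.
Qed.

Lemma fact_inv_pos n : 0 < / INR (fact n).
Proof. apply Rinv_0_lt_compat, lt_0_INR, lt_O_fact. Qed.

Definition IN_integrand (a : nat -> R) (j N : nat) (x : R) : R :=
  / INR (fact (j - 1)) * (fsum N (Lterm a j x) * FNfun a N x * Rabs (ln x) ^ (j - 1) / x).

Definition I_majorant (a : nat -> R) (j N0 : nat) (x : R) : R :=
  / INR (fact (j - 1)) * (Lfun a j x * FNfun a N0 x * Rabs (ln x) ^ (j - 1) / x).

Section Integrands.
Variables (a : nat -> R) (j : nat).
Hypothesis Hpos : forall k, 0 < a k.

Lemma continuous_IN_integrand N x : 0 < x < 1 -> continuous (IN_integrand a j N) x.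
Proof.
  intros Hx; unfold IN_integrand.
  apply continuous_Rmult; [apply continuous_Rconst|].
  apply continuous_Rdiv; [|apply continuous_id|lra].
  apply continuous_Rmult; [apply continuous_Rmult|].
  - apply (continuous_fsum N (fun k y => Lterm a j y k)); intros k; unfold Lterm.
    pose proof (rpow_in_01 x (a k) Hx (Hpos k)).
    apply continuous_Rdiv; [| |lra].
    + apply continuous_Rmult; [apply continuous_Rconst|apply continuous_rpow; lra].
    + apply continuous_Rminus; [apply continuous_Rconst|apply continuous_rpow; lra].
  - apply (continuous_fprod N (fun k y => 1 - rpow y (a k))); intros k.
    apply continuous_Rminus; [apply continuous_Rconst|apply continuous_rpow; lra].
  - apply continuous_Rpow, continuous_Rabs_comp, continuous_ln; lra.
Qed.

Lemma loc_int01_IN_integrand N : loc_int01 (IN_integrand a j N).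
Proof.
  intros u v Hu Huv Hv; apply (ex_RInt_continuous (V := R_CompleteNormedModule)).
  intros z Hz; rewrite Rmin_left, Rmax_right in Hz by auto; apply continuous_IN_integrand; lra.
Qed.

Hypothesis Hinf : cv_infty a.
Hypothesis Hx : x_alpha a = 1.

Lemma IN_integrand_bounds N0 N x : (N0 <= N)%nat -> 0 < x < 1 ->
  0 <= IN_integrand a j N x <= I_majorant a j N0 x.
Proof.
  intros HN Hx01; apply integrand_le; try lra.
  - apply Rlt_le, fact_inv_pos.
  - split; [apply fsum_ge0; intros; apply Lterm_ge0; auto|apply fsum_Lterm_le_Lfun; auto].
  - split; [apply FNfun_ge0|apply FNfun_le_n]; auto.
  - apply pow_le, Rabs_pos.
Qed.

Lemma I_integrand_bounds N0 x : 0 < x < 1 -> 0 <= I_integrand a j x <= I_majorant a j N0 x.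
Proof.
  intros Hx01; apply integrand_le; try lra.
  - apply Rlt_le, fact_inv_pos.
  - split; [apply Lfun_ge0; auto|lra].
  - split; [apply Ffun_ge0|apply Ffun_le_FNfun]; auto.
  - apply pow_le, Rabs_pos.
Qed.

(* On [u, v] both the partial sums of L and the partial products of F converge uniformly,
   with errors controlled by the tails at x = v. *)
Lemma IN_integrand_unif_cvg u v : 0 < u -> u <= v -> v < 1 ->
  unif_cvg_on (IN_integrand a j) (I_integrand a j) u v.
Proof.
  intros Hu Huv Hv.
  set (c := / INR (fact (j - 1))); pose proof (fact_inv_pos (j - 1)) as Hc; fold c in Hc.
  set (Cu := Rabs (ln u) ^ (j - 1) / u).
  destruct (rpow_summable a v Hx ltac:(lra)) as [Sv HSv].
  set (Lv := Lfun a j v); pose proof (Lfun_ge0 a j Hpos Hinf Hx v ltac:(lra)) as HLv; fold Lv in HLv.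
  apply (unif_cvg_on_of_bound _ _ _ _
    (fun N => c * Cu * ((Lv - fsum N (Lterm a j v)) + Lv * (Sv - fsum N (fun k => rpow v (a k)))))).
  - intros N x Hxuv.
    pose proof (Lfun_tail_le a j Hpos Hinf Hx x v N ltac:(lra) Hv) as TL; fold Lv in TL.
    pose proof (Ffun_tail_le a Hpos x v Sv N ltac:(lra) Hv HSv) as TF.
    pose proof (Lfun_le a j Hpos Hinf Hx x v ltac:(lra) Hv) as HLx; fold Lv in HLx.
    pose proof (FNfun_le1 a Hpos x N ltac:(lra)); pose proof (Ffun_ge0 a Hpos x ltac:(lra)).
    pose proof (Lfun_ge0 a j Hpos Hinf Hx x ltac:(lra)).
    pose proof (fsum_ge0 N (Lterm a j x) (fun k => Lterm_ge0 a j Hpos x k ltac:(lra))).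
    pose proof (ln_weight_bounds u x (j - 1) ltac:(lra) ltac:(lra)) as Hq; fold Cu in Hq.
    unfold IN_integrand, I_integrand; fold c.
    set (q := Rabs (ln x) ^ (j - 1) / x) in *.
    replace (c * (fsum N (Lterm a j x) * FNfun a N x * Rabs (ln x) ^ (j - 1) / x)
             - c * (Lfun a j x * Ffun a x * Rabs (ln x) ^ (j - 1) / x))
      with (c * q * (fsum N (Lterm a j x) * FNfun a N x - Lfun a j x * Ffun a x))
      by (unfold q, Rdiv; ring).
    rewrite Rabs_mult, Rabs_right by (apply Rle_ge, Rmult_le_pos; lra).
    apply Rmult_le_compat; [apply Rmult_le_pos; lra|apply Rabs_pos|apply Rmult_le_compat_l; lra|].
    eapply Rle_trans; [apply Rabs_mul_sub_le; lra|].
    apply Rplus_le_compat; [lra|apply Rmult_le_compat; lra].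
  - replace 0 with (c * Cu * ((Lv - Lv) + Lv * (Sv - Sv))) by ring.
    apply CV_mult; [apply Un_cv_const|].
    apply CV_plus; [apply CV_minus; [apply Un_cv_const|apply Lfun_cv; auto; lra]|].
    apply CV_mult; [apply Un_cv_const|apply CV_minus; [apply Un_cv_const|exact HSv]].
Qed.

Lemma loc_int01_I_integrand : loc_int01 (I_integrand a j).
Proof.
  intros u v Hu Huv Hv; apply (ex_RInt_unif_lim (IN_integrand a j) _ u v Huv).
  - intros N; apply loc_int01_IN_integrand; auto.
  - apply IN_integrand_unif_cvg; auto.
Qed.

End Integrands.

(** * The substitution x = exp (- t) *)

Lemma EU_integrand_exp a j N t : (forall k, 0 < a k) -> (1 <= j)%nat -> 0 < t ->
  EU_integrand a j N t = exp (- t) * IN_integrand a j N (exp (- t)).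
Proof.
  intros Hpos Hj Ht; set (x := exp (- t)).
  assert (Hx : 0 < x < 1) by (apply exp_neg_in_01; auto).
  assert (Hlnx : ln x = - t) by (unfold x; apply ln_exp).
  assert (Hrpow : forall i, exp (- (a i * t)) = rpow x (a i))
    by (intros i; rewrite rpow_exp_ln by lra; rewrite Hlnx; f_equal; ring).
  assert (Hfact : INR (fact (j - 1)) <> 0) by apply INR_fact_neq_0.
  unfold EU_integrand, IN_integrand.
  rewrite (fsum_ext N _ (fun k => Lterm a j x k * (/ INR (fact (j - 1)) * t ^ (j - 1) * FNfun a N x))).
  - rewrite fsum_mulr, Hlnx, Rabs_left, Ropp_involutive by lra.
    field; split; lra || auto.
  - intros k Hk; rewrite Hrpow; unfold FNfun.
    rewrite <- (fprod_omit_mul N k (fun i => 1 - rpow x (a i)) Hk).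
    rewrite (fprod_ext N _ (fun i => if Nat.eq_dec i k then 1 else 1 - rpow x (a i)))
      by (intros i _; destruct (Nat.eq_dec i k); [|rewrite Hrpow]; auto).
    pose proof (rpow_in_01 x (a k) Hx (Hpos k)); unfold Lterm.
    replace j with (S (j - 1)) at 3 by lia; simpl pow; rewrite Rpow_mult_distr.
    field; lra.
Qed.

Lemma is_RInt_exp_neg_subst (f g : R -> R) u v :
  (forall x, 0 < x < 1 -> continuous f x) -> (forall t, 0 < t -> g t = exp (- t) * f (exp (- t))) ->
  0 < u -> u <= v -> is_RInt g u v (RInt f (exp (- v)) (exp (- u))).
Proof.
  intros Hf Hg Hu Huv.
  assert (Hsubst := is_RInt_comp (V := R_CompleteNormedModule)
                      f (fun t => exp (- t)) (fun t => - exp (- t)) u v).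
  rewrite Rmin_left, Rmax_right in Hsubst by auto.
  specialize (Hsubst ltac:(intros t Ht; apply Hf, exp_neg_in_01; lra)).
  specialize (Hsubst ltac:(intros t Ht; split; [auto_derive; auto; ring|];
    apply (continuous_opp (V := R_NormedModule) (fun t => exp (- t)));
    apply continuous_exp_comp, (continuous_opp (V := R_NormedModule) (fun t => t)), continuous_id)).
  apply is_RInt_opp in Hsubst.
  assert (Hint : ex_RInt f (exp (- u)) (exp (- v))).
  { apply (ex_RInt_continuous (V := R_CompleteNormedModule)); intros z Hz; apply Hf.
    pose proof (exp_neg_in_01 u Hu); pose proof (exp_neg_in_01 v ltac:(lra)).
    pose proof (exp_neg_le u v Huv).
    rewrite Rmin_right, Rmax_left in Hz by lra; lra. }
  rewrite <- (opp_RInt_swap f _ _ Hint).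
  apply is_RInt_ext with (2 := Hsubst).
  intros t Ht; rewrite Rmin_left, Rmax_right in Ht by auto.
  rewrite Hg by lra; change (- (- exp (- t) * f (exp (- t))) = exp (- t) * f (exp (- t))); ring.
Qed.

(* t near 0 corresponds to x = e^{-t} near 1, and t near infinity to x near 0. *)
Lemma int0inf_cv_exp_neg_subst (f g : R -> R) l :
  (forall x, 0 < x < 1 -> continuous f x) -> (forall t, 0 < t -> g t = exp (- t) * f (exp (- t))) ->
  is_RInt01 f l -> int0inf_cv g l.
Proof.
  intros Hf Hg [_ Hl]; split.
  - intros u v Hu Huv; constructor; apply ex_RInt_Reals_0; eexists; apply is_RInt_exp_neg_subst; eauto.
  - intros eps Heps; destruct (Hl eps Heps) as [d [Hd Hclose]].
    destruct (small_pos_below d d Hd Hd) as [d' [Hd' [Hdd' [_ Hd'2]]]].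
    exists (- ln (1 - d')), (- ln d'); split; [pose proof (ln_lt0 (1 - d') ltac:(lra)); lra|].
    intros u v pr Hu Hv Huv; rewrite <- (RInt_Reals g u v pr).
    rewrite (is_RInt_unique g u v _ (is_RInt_exp_neg_subst f g u v Hf Hg ltac:(lra) Huv)).
    apply Hclose; [| |apply exp_neg_le; auto].
    + split; [apply exp_pos|]; apply Rlt_le_trans with d'; auto.
      rewrite <- (exp_ln d') by lra; apply exp_increasing; lra.
    + split; [|apply exp_neg_in_01; lra]; apply Rle_lt_trans with (1 - d'); [lra|].
      rewrite <- (exp_ln (1 - d')) at 1 by lra; apply exp_increasing; lra.
Qed.

Lemma int0inf_cv_unique g l1 l2 : int0inf_cv g l1 -> int0inf_cv g l2 -> l1 = l2.
Proof.
  intros [Hint H1] [_ H2]; apply Rminus_diag_uniq, Rabs_eq_0.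
  destruct (Rle_lt_or_eq_dec 0 (Rabs (l1 - l2)) (Rabs_pos _)) as [Hgap|]; auto; exfalso.
  set (e := Rabs (l1 - l2) / 2).
  destruct (H1 e ltac:(unfold e; lra)) as [d1 [M1 [Hd1 P1]]].
  destruct (H2 e ltac:(unfold e; lra)) as [d2 [M2 [Hd2 P2]]].
  set (u := Rmin d1 d2 / 2); set (v := Rmax (Rmax M1 M2) u + 1).
  pose proof (Rmin_pos d1 d2 Hd1 Hd2); pose proof (Rmin_l d1 d2); pose proof (Rmin_r d1 d2).
  pose proof (Rmax_l (Rmax M1 M2) u); pose proof (Rmax_r (Rmax M1 M2) u).
  pose proof (Rmax_l M1 M2); pose proof (Rmax_r M1 M2).
  destruct (Hint u v ltac:(unfold u; lra) ltac:(unfold v; lra)) as [pr].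
  specialize (P1 u v pr ltac:(unfold u; lra) ltac:(unfold v; lra) ltac:(unfold v; lra)).
  specialize (P2 u v pr ltac:(unfold u; lra) ltac:(unfold v; lra) ltac:(unfold v; lra)).
  apply Rabs_def2 in P1; apply Rabs_def2 in P2.
  assert (Rabs (l1 - l2) < 2 * e) by (apply Rabs_def1; lra); unfold e in *; lra.
Qed.

Lemma int01_eq f l : is_RInt01 f l -> int01 f = l.
Proof.
  intros Hfl; apply (is_RInt01_unique f); auto.
  apply int01_cv_iff; unfold int01; apply epsilon_spec; exists l; apply int01_cv_iff; auto.
Qed.

Lemma EU_eq a j N l : (forall k, 0 < a k) -> (1 <= j)%nat ->
  is_RInt01 (IN_integrand a j N) l -> EU a j N = l.
Proof.
  intros Hpos Hj Hl.
  assert (Hcv : int0inf_cv (EU_integrand a j N) l).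
  { apply (int0inf_cv_exp_neg_subst (IN_integrand a j N)); auto.
    - intros; apply continuous_IN_integrand; auto.
    - intros; apply EU_integrand_exp; auto. }
  apply (int0inf_cv_unique (EU_integrand a j N)); auto.
  unfold EU, int0inf; apply epsilon_spec; eauto.
Qed.

Theorem proposition3 (a : nat -> R) (j : nat)
  (Hpos : forall k, 0 < a k)
  (Hinf : cv_infty a)
  (Hx : x_alpha a = 1)
  (Hj : (2 <= j)%nat)
  (HN0 : exists (N0 : nat) (l : R),
     int01_cv (fun x => Lfun a j x * FNfun a N0 x * Rabs (ln x) ^ (j - 1) / x) l) :
  int01_cv (I_integrand a j) (Ival a j) /\
  Un_cv (fun N => EU a j N) (Ival a j).
Proof.
  destruct HN0 as [N0 [l0 Hl0]]; apply int01_cv_iff in Hl0.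
  set (lmaj := / INR (fact (j - 1)) * l0).
  assert (Hmaj : is_RInt01 (I_majorant a j N0) lmaj) by exact (is_RInt01_scal _ _ _ Hl0).
  destruct (is_RInt01_dominated (I_integrand a j) (I_majorant a j N0) lmaj
              (loc_int01_I_integrand a j Hpos Hinf Hx) (I_integrand_bounds a j Hpos Hinf Hx N0) Hmaj)
    as [L HL].
  unfold Ival; rewrite (int01_eq _ L HL); split; [apply int01_cv_iff; auto|].
  apply (is_RInt01_dominated_cvg (IN_integrand a j) (I_integrand a j) (I_majorant a j N0) lmaj N0);
    auto using IN_integrand_bounds, I_integrand_bounds, IN_integrand_unif_cvg.
  intros N HN.
  destruct (is_RInt01_dominated (IN_integrand a j N) (I_majorant a j N0) lmaj
              (loc_int01_IN_integrand a j Hpos N)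
              (fun x => IN_integrand_bounds a j Hpos Hinf Hx N0 N x HN) Hmaj)
    as [LN HLN].
  rewrite (EU_eq a j N LN); auto; lia.
Qed.
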